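(* Let $s,r,R$ be positive integers with $s\ge 2$, let $t=s-R-1$, and assume $\delta=R-rt\le 0$. Let $m\in\mathbb F_q^{s\times r}$ be the matrix whose rows $m_1,\dots,m_{R+1}$ all equal $e_1=(1,0,\dots,0)\in\mathbb F_q^{1\times r}$ and whose rows $m_{R+2},\dots,m_s$ are zero. Let $c\in\mathbb F_q^{s\times r}$ satisfy $c\in B(m,R)$ and $B(c,R)\cap B(R)=\emptyset$. Then $c_i=e_1$ for all $1\le i\le R+1$, and $\sum_{i=R+2}^{s}w(c_i)=R$.
   Context: $q$ is a prime power, $\mathbb F_q^{s\times r}$ the set of $s\times r$ matrices over $\mathbb F_q$ with rows $c_1,\dots,c_s\in\mathbb F_q^{1\times r}$. For a row $y=(y_1,\dots,y_r)$, the NRT weight is $w(y)=\max\{j: y_j\neq 0\}$ if $y\ne0$ and $w(0)=0$; for a matrix, $w(x)=\sum_i w(x_i)$. The NRT metric is $d(x,y)=w(x-y)$; $B(c,R)=\{x: d(x,c)\le R\}$, $B(R)=B(0,R)$. Note $\delta=R-rt$ equals $(r+1)(R+1)-sr-1$. *)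

From mathcomp Require Import all_boot all_order all_algebra all_field.
Set Implicit Arguments. Unset Strict Implicit. Unset Printing Implicit Defensive.
Import GRing.Theory Num.Theory.
Local Open Scope ring_scope.

(* F plays the role of F_q (any finite field). Columns are indexed by 'I_r,
   i.e. 0-based; the paper's 1-based column index j corresponds to j.+1. *)

Definition nrt_row_weight (F : finFieldType) (r : nat) (y : 'rV[F]_r) : nat :=
  \max_(j : 'I_r | y 0 j != 0) j.+1.

Definition nrt_weight (F : finFieldType) (s r : nat) (x : 'M[F]_(s, r)) : nat :=
  \sum_(i : 'I_s) nrt_row_weight (row i x).

Definition nrt_dist (F : finFieldType) (s r : nat) (x y : 'M[F]_(s, r)) : nat :=
  nrt_weight (x - y).

Definition nrt_ball (F : finFieldType) (s r : nat) (c : 'M[F]_(s, r)) (R : nat)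
  : {set 'M[F]_(s, r)} := [set x | (nrt_dist x c <= R)%N].

Definition e1 (F : finFieldType) (r : nat) : 'rV[F]_r :=
  \row_(j < r) (if (j : nat) == 0%N then 1 else 0).

Definition mR (F : finFieldType) (s r R : nat) : 'M[F]_(s, r) :=
  \matrix_(i < s, j < r) (if (i < R.+1)%N then e1 F r 0 j else 0).

From mathcomp Require Import all_boot all_order all_algebra all_field.
From mathcomp Require Import zify.
Import GRing.Theory Num.Theory.
Local Open Scope ring_scope.

(* Masking the rows of c outside a set P of row indices gives a matrix x with
   d(x, 0) = weight of c on P and d(x, c) = weight of c off P; so if the balls
   B(c, R) and B(R) are disjoint, every splitting of the rows of c puts weight
   > R on one of the two sides.  Since c is within distance R of m, each row
   c_i (i <= R+1) with c_i <> e_1 has weight at most w(c_i - e_1), and the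
   remaining rows of c contribute the same weight as those of c - m.  Splitting
   off the rows equal to e_1 (at most R of them if some c_i <> e_1) thus gives
   a contradiction, and splitting off the rows 2..R+1 (weight R) forces the
   tail weight to be at least R, while d(c, m) <= R bounds it by R. *)

Lemma leq_sum_subpred (I : finType) (P Q : pred I) (E : I -> nat) :
  (forall i, P i -> Q i) -> (\sum_(i | P i) E i <= \sum_(i | Q i) E i)%N.
Proof. exact: (sub_le_big leqnn (fun m n => leq_addr n m)). Qed.

Section RowWeight.
Variables (F : finFieldType) (r : nat).
Implicit Types y z : 'rV[F]_r.

Lemma nrt_row_weight_le y n :
  (forall j : 'I_r, y 0 j != 0 -> (j < n)%N) -> (nrt_row_weight y <= n)%N.
Proof. by move=> ltn_supp; apply/bigmax_leqP => j /ltn_supp. Qed.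

Lemma nrt_row_weight_gt y (j : 'I_r) : y 0 j != 0 -> (j < nrt_row_weight y)%N.
Proof. exact: (@leq_bigmax_cond _ (fun j : 'I_r => y 0 j != 0) (fun j => j.+1)). Qed.
Arguments nrt_row_weight_gt {y j}.

Lemma nrt_row_weight_eq0 y : (nrt_row_weight y == 0%N) = (y == 0).
Proof.
apply/idP/eqP => [/eqP w0 | ->]; last first.
  by rewrite -leqn0; apply: nrt_row_weight_le => j; rewrite mxE eqxx.
apply/rowP => j; rewrite mxE; apply/eqP/negP => /negP yj.
by have := nrt_row_weight_gt yj; rewrite w0.
Qed.

Lemma nrt_row_weight0 : nrt_row_weight (0 : 'rV[F]_r) = 0%N.
Proof. by apply/eqP; rewrite nrt_row_weight_eq0. Qed.

Lemma nrt_row_weightN y : nrt_row_weight (- y) = nrt_row_weight y.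
Proof.
by apply/eqP; rewrite eqn_leq; apply/andP; split; apply: nrt_row_weight_le => j yj;
  apply: nrt_row_weight_gt; move: yj; rewrite mxE oppr_eq0.
Qed.

Lemma nrt_row_weightD y z :
  (nrt_row_weight (y + z) <= maxn (nrt_row_weight y) (nrt_row_weight z))%N.
Proof.
apply: nrt_row_weight_le => j; rewrite mxE => yzj.
have [yj | /negPn/eqP yj0] := boolP (y 0 j != 0).
  by rewrite leq_max (nrt_row_weight_gt yj).
have zj : z 0 j != 0 by rewrite yj0 add0r in yzj.
by rewrite leq_max (nrt_row_weight_gt zj) orbT.
Qed.

Lemma nrt_row_weight_e1 : (0 < r)%N -> nrt_row_weight (e1 F r) = 1%N.
Proof.
move=> r_gt0; apply/eqP; rewrite eqn_leq; apply/andP; split.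
  by apply: nrt_row_weight_le => -[[|j] lt_j]; rewrite mxE //= eqxx.
by apply: (@nrt_row_weight_gt _ (Ordinal r_gt0)); rewrite mxE oner_eq0.
Qed.

Lemma nrt_row_weight_le_sub_e1 y : (0 < r)%N -> y != e1 F r ->
  (nrt_row_weight y <= nrt_row_weight (y - e1 F r))%N.
Proof.
move=> r_gt0 y_neq_e1; rewrite -{1}(subrK (e1 F r) y).
apply: leq_trans (nrt_row_weightD _ _) _.
have : (0 < nrt_row_weight (y - e1 F r))%N by rewrite lt0n nrt_row_weight_eq0 subr_eq0.
by rewrite nrt_row_weight_e1 // geq_max leqnn => ->.
Qed.

End RowWeight.

Section RowSplit.
Variables (F : finFieldType) (s r : nat).
Implicit Types (x c : 'M[F]_(s, r)) (P : pred 'I_s).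

Definition row_mask P x : 'M[F]_(s, r) :=
  \matrix_(i, j) (if P i then x i j else 0).

Lemma row_row_mask P x i : row i (row_mask P x) = if P i then row i x else 0.
Proof. by apply/rowP => j; rewrite !mxE; case: (P i); rewrite ?mxE. Qed.

Lemma nrt_dist_mask0 P x :
  nrt_dist (row_mask P x) 0 = (\sum_(i | P i) nrt_row_weight (row i x))%N.
Proof.
rewrite /nrt_dist /nrt_weight subr0 (bigID P) /= [X in (_ + X)%N]big1 ?addn0.
  by apply: eq_bigr => i Pi; rewrite row_row_mask Pi.
by move=> i /negbTE nPi; rewrite row_row_mask nPi nrt_row_weight0.
Qed.

Lemma nrt_dist_mask P x :
  nrt_dist (row_mask P x) x = (\sum_(i | ~~ P i) nrt_row_weight (row i x))%N.
Proof.
rewrite /nrt_dist /nrt_weight (bigID P) /= big1 ?add0n.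
  by apply: eq_bigr => i /negbTE nPi; rewrite linearB /= row_row_mask nPi sub0r
    nrt_row_weightN.
by move=> i Pi; rewrite linearB /= row_row_mask Pi subrr nrt_row_weight0.
Qed.

Lemma nrt_balls_disjoint_split c R P :
  nrt_ball c R :&: nrt_ball 0 R = set0 ->
  (R < \sum_(i | P i) nrt_row_weight (row i c))%N \/
  (R < \sum_(i | ~~ P i) nrt_row_weight (row i c))%N.
Proof.
move=> disj; rewrite !ltnNge.
case: leqP => [in0 | ]; last by left.
case: leqP => [inc | ]; last by right.
suff : row_mask P c \in (set0 : {set 'M[F]_(s, r)}) by rewrite inE.
by rewrite -disj !inE nrt_dist_mask nrt_dist_mask0 inc in0.
Qed.

Lemma sum1_ord_ltn n : (\sum_(i < s | (i < n)%N) 1 = minn s n)%N.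
Proof.
elim: s => [|s' IH]; first by rewrite big_ord0 min0n.
by rewrite big_mkcond big_ord_recr /= -big_mkcond IH; case: ltnP; lia.
Qed.

Lemma sum1_ord_ltn_neq n (i0 : 'I_s) : (i0 < n.+1)%N ->
  (\sum_(i < s | (i < n.+1) && (i != i0)) 1 <= n)%N.
Proof.
move=> i0_lt; have := sum1_ord_ltn n.+1.
by rewrite (bigD1 i0) //= add1n => sum_eq; rewrite -ltnS sum_eq geq_minr.
Qed.

End RowSplit.
Arguments nrt_balls_disjoint_split {F s r c R} P.
Arguments sum1_ord_ltn_neq {s n i0}.

Lemma row_mR (F : finFieldType) s r R (i : 'I_s) :
  row i (mR F s r R) = if (i < R.+1)%N then e1 F r else 0.
Proof. by apply/rowP => j; rewrite !mxE; case: ifP; rewrite ?mxE. Qed.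

Section Covering.
Variables (F : finFieldType) (s r R : nat) (c : 'M[F]_(s, r)).
Hypothesis r_gt0 : (0 < r)%N.
Hypothesis c_near_m : c \in nrt_ball (mR F s r R) R.
Hypothesis balls_disj : nrt_ball c R :&: nrt_ball 0 R = set0.

Let wc i := nrt_row_weight (row i c).
Let wd i := nrt_row_weight (row i (c - mR F s r R)).

Lemma wd_sum_le (Q : pred 'I_s) : (\sum_(i | Q i) wd i <= R)%N.
Proof.
move: c_near_m; rewrite inE /nrt_dist /nrt_weight; apply: leq_trans.
exact: leq_sum_subpred.
Qed.

Lemma wc_tail (i : 'I_s) : (R.+1 <= i)%N -> wc i = wd i.
Proof. by move=> tail_i; rewrite /wd linearB /= row_mR ltnNge tail_i subr0. Qed.

Lemma wc_head_le (i : 'I_s) : (i < R.+1)%N -> row i c != e1 F r -> (wc i <= wd i)%N.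
Proof.
by move=> head_i; rewrite /wd linearB /= row_mR head_i; exact: nrt_row_weight_le_sub_e1.
Qed.

Lemma head_sum_le {P : pred 'I_s} {i0 : 'I_s} : (i0 < R.+1)%N ->
  (forall i, P i -> [&& i < R.+1, i != i0 & row i c == e1 F r])%N ->
  (\sum_(i | P i) wc i <= R)%N.
Proof.
move=> i0_head P_head; apply: leq_trans _ (sum1_ord_ltn_neq i0_head).
rewrite (eq_bigr (fun=> 1%N)); last first.
  by move=> i /P_head /and3P[_ _ /eqP ci]; rewrite /wc ci nrt_row_weight_e1.
by apply: leq_sum_subpred => i /P_head /and3P[-> -> _].
Qed.

Lemma head_rows_e1 (i : 'I_s) : (i < R.+1)%N -> row i c = e1 F r.
Proof.
move=> head_i; apply/eqP/negPn/negP => ci_neq.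
pose P (j : 'I_s) := (j < R.+1)%N && (row j c == e1 F r).
have [] := nrt_balls_disjoint_split P balls_disj; rewrite ltnNge => /negP; apply.
  apply: (head_sum_le head_i) => j /andP[-> /eqP cj]; rewrite cj eqxx andbT.
  by apply: contra_neq ci_neq => <-.
apply: leq_trans (wd_sum_le (fun i => ~~ P i)); apply: leq_sum => j.
rewrite -/(wc j) negb_and -leqNgt; case/orP => [/wc_tail -> // | cj_neq].
by have [/wc_head_le -> | /wc_tail ->] := ltnP j R.+1.
Qed.

Lemma tail_weight : (0 < s)%N ->
  (\sum_(i : 'I_s | (R.+1 <= i)%N) nrt_row_weight (row i c) = R)%N.
Proof.
move=> s_gt0; pose i0 : 'I_s := Ordinal s_gt0.
apply/eqP; rewrite eqn_leq; apply/andP; split.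
  by rewrite (eq_bigr wd) ?wd_sum_le // => i /wc_tail.
pose P (i : 'I_s) := (i < R.+1)%N && (i != i0).
have [] := nrt_balls_disjoint_split P balls_disj.
  rewrite ltnNge (@head_sum_le P i0 (ltn0Sn R)) // => i /andP[head_i ->].
  by rewrite head_i head_rows_e1 ?eqxx.
rewrite (bigD1 i0) //=.
rewrite head_rows_e1 // nrt_row_weight_e1 // add1n ltnS => /leq_trans; apply.
apply: leq_sum_subpred => i.
by rewrite /P negb_and negbK -leqNgt => /andP[/orP[// | ->]].
Qed.

End Covering.

Theorem mainTheorem8 (F : finFieldType) (s r R : nat)
  (hs : (2 <= s)%N) (hr : (0 < r)%N) (hR : (0 < R)%N)
  (hdelta : (R%:Z - r%:Z * (s%:Z - R%:Z - 1)) <= 0)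
  (c : 'M[F]_(s, r))
  (hc : c \in nrt_ball (mR F s r R) R)
  (hdisj : nrt_ball c R :&: nrt_ball 0 R = set0) :
  (forall i : 'I_s, (i < R.+1)%N -> row i c = e1 F r) /\
  (\sum_(i : 'I_s | (R.+1 <= i)%N) nrt_row_weight (row i c) = R)%N.
Proof.
split; first exact: head_rows_e1.
by apply: tail_weight => //; apply: leq_trans hs.
Qed.
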